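(* Let $Z_{\mathrm{NL}}$ be a feasible point of problem (NLP). Let $\mathbf Z$ be an optimal solution of the SDP (SDP) constructed at $Z_{\mathrm{NL}}$. Then the point obtained from $\mathbf Z$ by keeping $\mathbf A,\mathbf B,\mathbf d,\boldsymbol{\mathcal Z},\boldsymbol\lambda,\mathbf K,\underline{\mathbf b},\bar{\mathbf b},\tilde{\mathbf\Theta},\tilde{\mathbf r},\bar{\boldsymbol\epsilon}$ and replacing each hatted matrix variable ($\hat{\tilde{\mathbf M}},\hat{\underline{\mathbf D}}_{[i]},\hat{\mathbf W}_{[i]},\hat{\bar{\mathbf D}}_{[i]},\hat{\underline{\mathbf S}}_{[i]},\hat{\bar{\mathbf S}}_{[i]},\hat{\underline{\mathbf R}}_{[i]},\hat{\bar{\mathbf R}}_{[i]}$) by its inverse is feasible for (NLP), and $$\alpha\|\underline{\mathbf b}\|_1+\beta\|\bar{\boldsymbol\epsilon}\|_1+\gamma\tilde{\mathbf r}\le\alpha\|\underline b\|_1+\beta\|\bar\epsilon\|_1+\gamma\tilde r,$$ where the right side is evaluated at $Z_{\mathrm{NL}}$.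
   Context: Notation: $\mathcal{P}(M,b):=\{x:-b\le Mx\le b\}$; $M_i$ row $i$ of $M$, $b_i$ entry $i$ of $b$; $\mathbb{D}_+^m$ diagonal $m\times m$ matrices with positive diagonal; $\mathbb{S}_+^m$ symmetric positive definite $m\times m$ matrices; $\succ0$ ($\prec0$) symmetric positive (negative) definite; $*$ symmetric blocks; $\mathbf 1$ all-ones; $\oplus$ Minkowski sum. For $\mathbf L,L\in\mathbb{R}^{m\times n}$ and symmetric invertible $\mathbf D,D$, $\mathcal{L}^{L,D}_{\mathbf L,\mathbf D}:=\mathbf L^\top D^{-1}L+L^\top D^{-1}\mathbf L-L^\top D^{-1}\mathbf DD^{-1}L$. Fixed data: $F\in\mathbb{R}^{m_w\times n_x}$, $\underline P\in\mathbb{R}^{\underline m\times n_x}$, $\bar P\in\mathbb{R}^{\bar m\times n_x}$, $\bar E\in\mathbb{R}^{m_\epsilon\times n_x}$, $V^x\in\mathbb{R}^{m_x\times n_x}$, $v^x\in\mathbb{R}^{m_x}_+$, $V^u\in\mathbb{R}^{m_u\times n_u}$, $v^u\in\mathbb{R}^{m_u}_+$, vertices $x_{[1]},\dots,x_{[m_x^v]}$ of $\mathcal{P}(V^x,v^x)$, $\tilde Q\in\mathbb{S}_+^{n_x}$, $\tilde R\in\mathbb{S}_+^{n_u}$, weights $\alpha,\beta,\gamma\ge0$, $\hat\theta_T>0$, and a finite set $\mathcal{J}_T$ of triples $z=(x,u,x_+)\in\mathbb{R}^{n_x}\times\mathbb{R}^{n_u}\times\mathbb{R}^{n_x}$; $\zeta(A,B,z):=x_+-Ax-Bu$.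 Set $\hat\Sigma$: $(A,B,d,\mathcal Z,\lambda)$ with $\mathcal Z\in\mathbb{R}^{m_w\times(2n_x+n_u)}$, $\mathcal Z\ge0$, $-\mathcal Z\le F[-A\ -B\ \mathbf I]\le\mathcal Z$ entrywise, $\sum_j\mathcal Z_{ij}\le\lambda$ for all $i$, $d>\lambda\hat\theta_T\mathbf 1$, and $\zeta(A,B,z)\in\mathcal{P}(F,d-\lambda\hat\theta_T\mathbf 1)$ for all $z\in\mathcal J_T$. Set $\bar{\mathcal S}$: $(\bar b,\bar\epsilon)$ with $x_{[k]}\in\mathcal{P}(\bar P,\bar b)\oplus\mathcal{P}(\bar E,\bar\epsilon)$ for all $k$. Nonlinear conditions: (RPI$_i$) $\begin{bmatrix}2\underline b_i-\underline b^\top\underline D_{[i]}\underline b-d^\top W_{[i]}d & \underline P_i & \underline P_i(A+BK)\\ * & F^\top W_{[i]}F & \mathbf 0\\ * & * & \underline P^\top\underline D_{[i]}\underline P\end{bmatrix}\succ0$; (PI$_i$) $\begin{bmatrix}2\bar b_i-\bar b^\top\bar D_{[i]}\bar b & \bar P_i(A+BK)\\ * & \bar P^\top\bar D_{[i]}\bar P\end{bmatrix}\succ0$; (X$_i$) $\begin{bmatrix}2v^x_i-\underline b^\top\underline S_{[i]}\underline b-\bar b^\top\bar S_{[i]}\bar b & V^x_i & V^x_i\\ * & \underline P^\top\underline S_{[i]}\underline P & \mathbf 0\\ * & * & \bar P^\top\bar S_{[i]}\bar P\end{bmatrix}\succ0$; (U$_i$) same as (X$_i$) with $v^x_i,V^x_i,\underline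 S,\bar S$ replaced by $v^u_i,V^u_iK,\underline R,\bar R$; (D) $(A+BK)^\top\tilde\Theta(A+BK)-\tilde\Theta+\tilde Q+K^\top\tilde RK\prec0$; (E) $\bar P^\top\tilde M\bar P-\tilde\Theta\succ0$, $\tilde r-\bar b^\top\tilde M\bar b>0$. Problem (NLP): minimize $\alpha\|\underline b\|_1+\beta\|\bar\epsilon\|_1+\gamma\tilde r$ over $Z_{\mathrm{NL}}=(A,B,d,\mathcal Z,\lambda,K,\underline b,\bar b,\tilde\Theta\in\mathbb{S}_+^{n_x},\tilde r,\tilde M\in\mathbb{D}_+^{\bar m},\bar\epsilon,\{\underline D_{[i]}\in\mathbb{D}_+^{\underline m},W_{[i]}\in\mathbb{D}_+^{m_w}\}_{i\le\underline m},\{\bar D_{[i]}\in\mathbb{D}_+^{\bar m}\}_{i\le\bar m},\{\underline S_{[i]},\bar S_{[i]}\}_{i\le m_x},\{\underline R_{[i]},\bar R_{[i]}\}_{i\le m_u})$ (with $\underline S_{[i]},\underline R_{[i]}\in\mathbb{D}_+^{\underline m}$, $\bar S_{[i]},\bar R_{[i]}\in\mathbb{D}_+^{\bar m}$) subject to $(A,B,d,\mathcal Z,\lambda)\in\hat\Sigma$, $(\bar b,\bar\epsilon)\in\bar{\mathcal S}$, (RPI$_i$) for $i\le\underline m$, (PI$_i$) for $i\le\bar m$, (X$_i$) for $i\le m_x$, (U$_i$) for $i\le m_u$, (D), (E). Problem (SDP) at $Z_{\mathrm{NL}}$: minimize $\alpha\|\underline{\mathbf b}\|_1+\beta\|\bar{\boldsymbol\epsilon}\|_1+\gamma\tilde{\mathbf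 r}$ over bold variables of the same sizes (with $\tilde{\mathbf\Theta}\in\mathbb{S}_+^{n_x}$ and all hatted matrices diagonal of the sizes of the corresponding multipliers) subject to $(\mathbf A,\mathbf B,\mathbf d,\boldsymbol{\mathcal Z},\boldsymbol\lambda)\in\hat\Sigma$, $(\bar{\mathbf b},\bar{\boldsymbol\epsilon})\in\bar{\mathcal S}$ and the following LMIs, in which unbolded quantities are the values in $Z_{\mathrm{NL}}$: for each $i\le\underline m$, $\begin{bmatrix}\mathbf I&\mathbf 0&\mathbf 0&-\mathbf B^\top\underline P_i^\top&\mathbf 0&\mathbf K\\ *&\hat{\underline{\mathbf D}}_{[i]}&\mathbf 0&\underline{\mathbf b}&\mathbf 0&\mathbf 0\\ *&*&\hat{\mathbf W}_{[i]}&\mathbf d&\mathbf 0&\mathbf 0\\ *&*&*&2\underline{\mathbf b}_i+\mathcal{L}^{B^\top\underline P_i^\top,\mathbf I}_{\mathbf B^\top\underline P_i^\top,\mathbf I}&\underline P_i&\underline P_i\mathbf A\\ *&*&*&*&\mathcal{L}^{F,W_{[i]}^{-1}}_{F,\hat{\mathbf W}_{[i]}}&\mathbf 0\\ *&*&*&*&*&\mathcal{L}^{\underline P,\underline D_{[i]}^{-1}}_{\underline P,\hat{\underline{\mathbf D}}_{[i]}}+\mathcal{L}^{K,\mathbf I}_{\mathbf K,\mathbf I}\end{bmatrix}\succ0$; for each $i\le\bar m$, $\begin{bmatrix}\mathbf I&\mathbf 0&-\mathbf B^\top\bar P_i^\top&\mathbf K\\ *&\hat{\bar{\mathbf D}}_{[i]}&\bar{\mathbf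 b}&\mathbf 0\\ *&*&2\bar{\mathbf b}_i+\mathcal{L}^{B^\top\bar P_i^\top,\mathbf I}_{\mathbf B^\top\bar P_i^\top,\mathbf I}&\bar P_i\mathbf A\\ *&*&*&\mathcal{L}^{\bar P,\bar D_{[i]}^{-1}}_{\bar P,\hat{\bar{\mathbf D}}_{[i]}}+\mathcal{L}^{K,\mathbf I}_{\mathbf K,\mathbf I}\end{bmatrix}\succ0$; for each $i\le m_x$, $\begin{bmatrix}\hat{\underline{\mathbf S}}_{[i]}&\mathbf 0&\underline{\mathbf b}&\mathbf 0&\mathbf 0\\ *&\hat{\bar{\mathbf S}}_{[i]}&\bar{\mathbf b}&\mathbf 0&\mathbf 0\\ *&*&2v^x_i&V^x_i&V^x_i\\ *&*&*&\mathcal{L}^{\underline P,\underline S_{[i]}^{-1}}_{\underline P,\hat{\underline{\mathbf S}}_{[i]}}&\mathbf 0\\ *&*&*&*&\mathcal{L}^{\bar P,\bar S_{[i]}^{-1}}_{\bar P,\hat{\bar{\mathbf S}}_{[i]}}\end{bmatrix}\succ0$; for each $i\le m_u$, the same with $\hat{\underline{\mathbf S}},\hat{\bar{\mathbf S}},\underline S,\bar S,v^x_i,V^x_i$ replaced by $\hat{\underline{\mathbf R}},\hat{\bar{\mathbf R}},\underline R,\bar R,v^u_i,V^u_i\mathbf K$; $\begin{bmatrix}\mathbf I&\mathbf 0&\mathbf 0&-\mathbf B^\top&\mathbf K\\ *&\tilde Q^{-1}&\mathbf 0&\mathbf 0&\mathbf I\\ *&*&\tilde R^{-1}&\mathbf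 0&\mathbf K\\ *&*&*&\mathcal{L}^{\mathbf I,\tilde\Theta}_{\mathbf I,\tilde{\mathbf\Theta}}+\mathcal{L}^{B^\top,\mathbf I}_{\mathbf B^\top,\mathbf I}&\mathbf A\\ *&*&*&*&\tilde{\mathbf\Theta}+\mathcal{L}^{K,\mathbf I}_{\mathbf K,\mathbf I}\end{bmatrix}\succ0$; and $\mathcal{L}^{\bar P,\tilde M^{-1}}_{\bar P,\hat{\tilde{\mathbf M}}}-\tilde{\mathbf\Theta}\succ0$, $\begin{bmatrix}\hat{\tilde{\mathbf M}}&\bar{\mathbf b}\\ *&\tilde{\mathbf r}\end{bmatrix}\succ0$. (The top-left $\mathbf I$ blocks are $n_u\times n_u$.) *)

From HB Require Import structures.
From mathcomp Require Import all_boot all_order all_algebra.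

Set Implicit Arguments.
Unset Strict Implicit.
Unset Printing Implicit Defensive.

Import Order.TTheory GRing.Theory Num.Theory.
Local Open Scope ring_scope.

Section NLPSDP.
Variable R : realFieldType.

Definition posdef n (M : 'M[R]_n) : Prop :=
  M^T = M /\ forall x : 'cV[R]_n, x != 0 -> 0 < (x^T *m M *m x) 0 0.
Definition negdef n (M : 'M[R]_n) : Prop := posdef (- M).
Definition diagpos n (D : 'M[R]_n) : Prop :=
  is_diag_mx D /\ forall i, 0 < D i i.

Definition mxle m n (A B : 'M[R]_(m, n)) : Prop := forall i j, A i j <= B i j.
Definition mxlt m n (A B : 'M[R]_(m, n)) : Prop := forall i j, A i j < B i j.

Definition inP m n (M : 'M[R]_(m, n)) (b : 'cV[R]_m) (x : 'cV[R]_n) : Prop :=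
  mxle (- b) (M *m x) /\ mxle (M *m x) b.

Definition norm1 m (b : 'cV[R]_m) : R := \sum_i `|b i 0|.

Definition ones m : 'cV[R]_m := const_mx 1.

Definition sc (x : R) : 'M[R]_1 := x%:M.

(* calL Lb Db L D  =  \mathcal L^{L,D}_{Lb,Db}
   = Lb^T D^{-1} L + L^T D^{-1} Lb - L^T D^{-1} Db D^{-1} L *)
Definition calL m n (Lb : 'M[R]_(m, n)) (Db : 'M[R]_m)
  (L : 'M[R]_(m, n)) (D : 'M[R]_m) : 'M[R]_n :=
  Lb^T *m invmx D *m L + L^T *m invmx D *m Lb
  - L^T *m invmx D *m Db *m invmx D *m L.

(* symmetric block matrices given by their upper triangular blocks
   (the lower blocks "*" are the transposes) *)
Definition sym2 p q (A : 'M[R]_p) (B : 'M[R]_(p, q)) (C : 'M[R]_q)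
  : 'M[R]_(p + q) := block_mx A B B^T C.

Definition sym3 p q r (A11 : 'M[R]_p) (A12 : 'M[R]_(p, q)) (A13 : 'M[R]_(p, r))
  (A22 : 'M[R]_q) (A23 : 'M[R]_(q, r)) (A33 : 'M[R]_r) : 'M[R]_(p + (q + r)) :=
  sym2 A11 (row_mx A12 A13) (sym2 A22 A23 A33).

Definition sym4 p q r s (A11 : 'M[R]_p) (A12 : 'M[R]_(p, q)) (A13 : 'M[R]_(p, r))
  (A14 : 'M[R]_(p, s))
  (A22 : 'M[R]_q) (A23 : 'M[R]_(q, r)) (A24 : 'M[R]_(q, s))
  (A33 : 'M[R]_r) (A34 : 'M[R]_(r, s)) (A44 : 'M[R]_s)
  : 'M[R]_(p + (q + (r + s))) :=
  sym2 A11 (row_mx A12 (row_mx A13 A14)) (sym3 A22 A23 A24 A33 A34 A44).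

Definition sym5 p q r s t (A11 : 'M[R]_p) (A12 : 'M[R]_(p, q)) (A13 : 'M[R]_(p, r))
  (A14 : 'M[R]_(p, s)) (A15 : 'M[R]_(p, t))
  (A22 : 'M[R]_q) (A23 : 'M[R]_(q, r)) (A24 : 'M[R]_(q, s)) (A25 : 'M[R]_(q, t))
  (A33 : 'M[R]_r) (A34 : 'M[R]_(r, s)) (A35 : 'M[R]_(r, t))
  (A44 : 'M[R]_s) (A45 : 'M[R]_(s, t)) (A55 : 'M[R]_t)
  : 'M[R]_(p + (q + (r + (s + t)))) :=
  sym2 A11 (row_mx A12 (row_mx A13 (row_mx A14 A15)))
    (sym4 A22 A23 A24 A25 A33 A34 A35 A44 A45 A55).

Definition sym6 p q r s t u (A11 : 'M[R]_p) (A12 : 'M[R]_(p, q)) (A13 : 'M[R]_(p, r))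
  (A14 : 'M[R]_(p, s)) (A15 : 'M[R]_(p, t)) (A16 : 'M[R]_(p, u))
  (A22 : 'M[R]_q) (A23 : 'M[R]_(q, r)) (A24 : 'M[R]_(q, s)) (A25 : 'M[R]_(q, t))
  (A26 : 'M[R]_(q, u))
  (A33 : 'M[R]_r) (A34 : 'M[R]_(r, s)) (A35 : 'M[R]_(r, t)) (A36 : 'M[R]_(r, u))
  (A44 : 'M[R]_s) (A45 : 'M[R]_(s, t)) (A46 : 'M[R]_(s, u))
  (A55 : 'M[R]_t) (A56 : 'M[R]_(t, u)) (A66 : 'M[R]_u)
  : 'M[R]_(p + (q + (r + (s + (t + u))))) :=
  sym2 A11 (row_mx A12 (row_mx A13 (row_mx A14 (row_mx A15 A16))))
    (sym5 A22 A23 A24 A25 A26 A33 A34 A35 A36 A44 A45 A46 A55 A56 A66).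

(* Fixed data of the problem.  Dimensions:
   nx = n_x, nu = n_u, mw = m_w, mlo = underline m, mhi = bar m,
   meps = m_epsilon, mx = m_x, mu = m_u, mxv = m_x^v. *)
Record data (nx nu mw mlo mhi meps mx mu mxv : nat) := Data {
  dF : 'M[R]_(mw, nx);
  dPlo : 'M[R]_(mlo, nx);
  dPhi : 'M[R]_(mhi, nx);
  dE : 'M[R]_(meps, nx);
  dVx : 'M[R]_(mx, nx);
  dvx : 'cV[R]_mx;
  dVu : 'M[R]_(mu, nu);
  dvu : 'cV[R]_mu;
  dxv : 'I_mxv -> 'cV[R]_nx;
  dQ : 'M[R]_nx;
  dR : 'M[R]_nu;
  dalpha : R; dbeta : R; dgamma : R;
  dtheta : R;
  dJ : seq ('cV[R]_nx * 'cV[R]_nu * 'cV[R]_nx)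
}.

(* Decision variables (same shape for (NLP) and (SDP)). *)
Record var (nx nu mw mlo mhi meps mx mu : nat) := Var {
  vA : 'M[R]_nx;
  vB : 'M[R]_(nx, nu);
  vd : 'cV[R]_mw;
  vZ : 'M[R]_(mw, nx + nu + nx);
  vlam : R;
  vK : 'M[R]_(nu, nx);
  vblo : 'cV[R]_mlo;
  vbhi : 'cV[R]_mhi;
  vTh : 'M[R]_nx;
  vr : R;
  vM : 'M[R]_mhi;
  veps : 'cV[R]_meps;
  vDlo : 'I_mlo -> 'M[R]_mlo;
  vW : 'I_mlo -> 'M[R]_mw;
  vDhi : 'I_mhi -> 'M[R]_mhi;
  vSlo : 'I_mx -> 'M[R]_mlo;
  vShi : 'I_mx -> 'M[R]_mhi;
  vRlo : 'I_mu -> 'M[R]_mlo;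
  vRhi : 'I_mu -> 'M[R]_mhi
}.

Variables nx nu mw mlo mhi meps mx mu mxv : nat.
Implicit Types (D : data nx nu mw mlo mhi meps mx mu mxv)
  (Z : var nx nu mw mlo mhi meps mx mu).

Definition zeta (A : 'M[R]_nx) (B : 'M[R]_(nx, nu))
  (z : 'cV[R]_nx * 'cV[R]_nu * 'cV[R]_nx) : 'cV[R]_nx :=
  z.2 - A *m z.1.1 - B *m z.1.2.

Definition hatSigma D (A : 'M[R]_nx) (B : 'M[R]_(nx, nu)) (d : 'cV[R]_mw)
  (Zc : 'M[R]_(mw, nx + nu + nx)) (lam : R) : Prop :=
  let G := dF D *m row_mx (row_mx (- A) (- B)) (1%:M : 'M[R]_nx) in
  mxle 0 Zc /\ mxle (- Zc) G /\ mxle G Zc /\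
  (forall i, \sum_j Zc i j <= lam) /\
  mxlt ((lam * dtheta D) *: ones mw) d /\
  (forall z, z \in dJ D -> inP (dF D) (d - (lam * dtheta D) *: ones mw) (zeta A B z)).

Definition barS D (bhi : 'cV[R]_mhi) (eps : 'cV[R]_meps) : Prop :=
  forall k, exists y z, dxv D k = y + z /\ inP (dPhi D) bhi y /\ inP (dE D) eps z.

Definition cost D Z : R :=
  dalpha D * norm1 (vblo Z) + dbeta D * norm1 (veps Z) + dgamma D * vr Z.

Definition nlp_feas D Z : Prop :=
  let A := vA Z in let B := vB Z in let K := vK Z in
  let Acl := A + B *m K in
  let blo := vblo Z in let bhi := vbhi Z in let d := vd Z in
  let F := dF D in let Plo := dPlo D in let Phi := dPhi D in
  hatSigma D A B d (vZ Z) (vlam Z) /\ barS D bhi (veps Z) /\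
      posdef (vTh Z) /\ diagpos (vM Z) /\
      (forall i, diagpos (vDlo Z i) /\ diagpos (vW Z i)) /\
      (forall i, diagpos (vDhi Z i)) /\
      (forall i, diagpos (vSlo Z i) /\ diagpos (vShi Z i)) /\
      (forall i, diagpos (vRlo Z i) /\ diagpos (vRhi Z i)) /\
  (
      (forall i, posdef (sym3
          (sc (2 * blo i 0) - blo^T *m vDlo Z i *m blo - d^T *m vW Z i *m d)
          (row i Plo) (row i Plo *m Acl)
          (F^T *m vW Z i *m F) 0
          (Plo^T *m vDlo Z i *m Plo))) /\
      (forall i, posdef (sym2
          (sc (2 * bhi i 0) - bhi^T *m vDhi Z i *m bhi)
          (row i Phi *m Acl)
          (Phi^T *m vDhi Z i *m Phi))) /\
      (forall i, posdef (sym3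
          (sc (2 * dvx D i 0) - blo^T *m vSlo Z i *m blo - bhi^T *m vShi Z i *m bhi)
          (row i (dVx D)) (row i (dVx D))
          (Plo^T *m vSlo Z i *m Plo) 0
          (Phi^T *m vShi Z i *m Phi))) /\
      (forall i, posdef (sym3
          (sc (2 * dvu D i 0) - blo^T *m vRlo Z i *m blo - bhi^T *m vRhi Z i *m bhi)
          (row i (dVu D) *m K) (row i (dVu D) *m K)
          (Plo^T *m vRlo Z i *m Plo) 0
          (Phi^T *m vRhi Z i *m Phi))) /\
      negdef (Acl^T *m vTh Z *m Acl - vTh Z + dQ D + K^T *m dR D *m K) /\
      posdef (Phi^T *m vM Z *m Phi - vTh Z) /\
      0 < vr Z - (bhi^T *m vM Z *m bhi) 0 0).

Definition sdp_feas D (Z0 Zb : var nx nu mw mlo mhi meps mx mu) : Prop :=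
  let A := vA Zb in let B := vB Zb in let K := vK Zb in
  let B0 := vB Z0 in let K0 := vK Z0 in
  let blo := vblo Zb in let bhi := vbhi Zb in let d := vd Zb in
  let F := dF D in let Plo := dPlo D in let Phi := dPhi D in
  let Inu : 'M[R]_nu := 1%:M in let Inx : 'M[R]_nx := 1%:M in
  hatSigma D A B d (vZ Zb) (vlam Zb) /\ barS D bhi (veps Zb) /\
      posdef (vTh Zb) /\ is_diag_mx (vM Zb) /\
      (forall i, is_diag_mx (vDlo Zb i) /\ is_diag_mx (vW Zb i)) /\
      (forall i, is_diag_mx (vDhi Zb i)) /\
      (forall i, is_diag_mx (vSlo Zb i) /\ is_diag_mx (vShi Zb i)) /\
      (forall i, is_diag_mx (vRlo Zb i) /\ is_diag_mx (vRhi Zb i)) /\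
  (
      (forall i, posdef (sym6
          Inu (0 : 'M[R]_(nu, mlo)) (0 : 'M[R]_(nu, mw)) (- (B^T *m (row i Plo)^T))
            (0 : 'M[R]_(nu, nx)) K
          (vDlo Zb i) (0 : 'M[R]_(mlo, mw)) blo (0 : 'M[R]_(mlo, nx)) (0 : 'M[R]_(mlo, nx))
          (vW Zb i) d (0 : 'M[R]_(mw, nx)) (0 : 'M[R]_(mw, nx))
          (sc (2 * blo i 0) + calL (B^T *m (row i Plo)^T) Inu (B0^T *m (row i Plo)^T) Inu)
            (row i Plo) (row i Plo *m A)
          (calL F (vW Zb i) F (invmx (vW Z0 i))) (0 : 'M[R]_nx)
          (calL Plo (vDlo Zb i) Plo (invmx (vDlo Z0 i)) + calL K Inu K0 Inu))) /\
      (forall i, posdef (sym4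
          Inu (0 : 'M[R]_(nu, mhi)) (- (B^T *m (row i Phi)^T)) K
          (vDhi Zb i) bhi (0 : 'M[R]_(mhi, nx))
          (sc (2 * bhi i 0) + calL (B^T *m (row i Phi)^T) Inu (B0^T *m (row i Phi)^T) Inu)
            (row i Phi *m A)
          (calL Phi (vDhi Zb i) Phi (invmx (vDhi Z0 i)) + calL K Inu K0 Inu))) /\
      (forall i, posdef (sym5
          (vSlo Zb i) (0 : 'M[R]_(mlo, mhi)) blo (0 : 'M[R]_(mlo, nx)) (0 : 'M[R]_(mlo, nx))
          (vShi Zb i) bhi (0 : 'M[R]_(mhi, nx)) (0 : 'M[R]_(mhi, nx))
          (sc (2 * dvx D i 0)) (row i (dVx D)) (row i (dVx D))
          (calL Plo (vSlo Zb i) Plo (invmx (vSlo Z0 i))) (0 : 'M[R]_nx)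
          (calL Phi (vShi Zb i) Phi (invmx (vShi Z0 i))))) /\
      (forall i, posdef (sym5
          (vRlo Zb i) (0 : 'M[R]_(mlo, mhi)) blo (0 : 'M[R]_(mlo, nx)) (0 : 'M[R]_(mlo, nx))
          (vRhi Zb i) bhi (0 : 'M[R]_(mhi, nx)) (0 : 'M[R]_(mhi, nx))
          (sc (2 * dvu D i 0)) (row i (dVu D) *m K) (row i (dVu D) *m K)
          (calL Plo (vRlo Zb i) Plo (invmx (vRlo Z0 i))) (0 : 'M[R]_nx)
          (calL Phi (vRhi Zb i) Phi (invmx (vRhi Z0 i))))) /\
      posdef (sym5
          Inu (0 : 'M[R]_(nu, nx)) (0 : 'M[R]_(nu, nu)) (- B^T) K
          (invmx (dQ D)) (0 : 'M[R]_(nx, nu)) (0 : 'M[R]_nx) Inx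
          (invmx (dR D)) (0 : 'M[R]_(nu, nx)) K
          (calL Inx (vTh Zb) Inx (vTh Z0) + calL B^T Inu B0^T Inu) A
          (vTh Zb + calL K Inu K0 Inu)) /\
      posdef (calL Phi (vM Zb) Phi (invmx (vM Z0)) - vTh Zb) /\
      posdef (sym2 (vM Zb) bhi (sc (vr Zb)))).

Definition sdp_opt D (Z0 Zb : var nx nu mw mlo mhi meps mx mu) : Prop :=
  sdp_feas D Z0 Zb /\ forall Z', sdp_feas D Z0 Z' -> cost D Zb <= cost D Z'.

Definition invert_hats Z : var nx nu mw mlo mhi meps mx mu :=
  Var (vA Z) (vB Z) (vd Z) (vZ Z) (vlam Z) (vK Z) (vblo Z) (vbhi Z) (vTh Z) (vr Z)
    (invmx (vM Z)) (veps Z)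
    (fun i => invmx (vDlo Z i)) (fun i => invmx (vW Z i)) (fun i => invmx (vDhi Z i))
    (fun i => invmx (vSlo Z i)) (fun i => invmx (vShi Z i))
    (fun i => invmx (vRlo Z i)) (fun i => invmx (vRhi Z i)).

End NLPSDP.

From HB Require Import structures.
From mathcomp Require Import all_boot all_order all_algebra.
From mathcomp Require Import ring.
Import Order.TTheory GRing.Theory Num.Theory.
Local Open Scope ring_scope.
Set Implicit Arguments.
Unset Strict Implicit.
Unset Printing Implicit Defensive.

(* Each LMI of (SDP) is, after its identity and multiplier pivots are eliminated
   by Schur complements, the corresponding constraint of (NLP) at the inverted
   multipliers, except that every term L'^T D'^-1 L' that is nonlinear in the
   decision variables is replaced by its linearization calL at Z_NL.  Completing
   the square,
     L'^T D'^-1 L' - calL L' D' L D = (L' - D' D^-1 L)^T D'^-1 (L' - D' D^-1 L),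
   so the linearization is a lower bound and a feasible point of (SDP) yields,
   after inverting its multipliers, a feasible point of (NLP).  The bound is exact
   at the linearization point, so inverting the multipliers of Z_NL gives a
   feasible point of (SDP) with the cost of Z_NL, and optimality gives the cost
   inequality. *)

Lemma addmxE (V : nmodType) m n (A B : 'M[V]_(m, n)) i j : (A + B) i j = A i j + B i j.
Proof. by rewrite mxE. Qed.

Lemma oppmxE (V : zmodType) m n (A : 'M[V]_(m, n)) i j : (- A) i j = - A i j.
Proof. by rewrite mxE. Qed.

Lemma zeromxE (V : nmodType) m n i j : (0 : 'M[V]_(m, n)) i j = 0.
Proof. by rewrite mxE. Qed.

Ltac entrywise_ring :=
  apply/matrixP => ? ?; rewrite ?(addmxE, oppmxE, zeromxE); ring.

Section Semidefinite.
Variable R : realFieldType.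

Definition qform n (A : 'M[R]_n) (x : 'cV[R]_n) : R := (x^T *m A *m x) 0 0.

Definition psd n (A : 'M[R]_n) : Prop := A^T = A /\ forall x, 0 <= qform A x.

Lemma trmxD m n (A B : 'M[R]_(m, n)) : (A + B)^T = A^T + B^T.
Proof. exact: linearD. Qed.

Lemma trmxB m n (A B : 'M[R]_(m, n)) : (A - B)^T = A^T - B^T.
Proof. exact: linearB. Qed.

Lemma trmxN m n (A : 'M[R]_(m, n)) : (- A)^T = - A^T.
Proof. exact: linearN. Qed.

Lemma qformD n (A B : 'M[R]_n) x : qform (A + B) x = qform A x + qform B x.
Proof. by rewrite /qform mulmxDr mulmxDl addmxE. Qed.

Lemma posdef_sym n (A : 'M[R]_n) : posdef A -> A^T = A.
Proof. by case. Qed.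

Lemma posdef_psd n (A : 'M[R]_n) : posdef A -> psd A.
Proof.
move=> [sA pA]; split=> // x; have [->|/pA/ltW//] := eqVneq x 0.
by rewrite /qform mulmx0 mxE.
Qed.

Lemma psd0 n : psd (0 : 'M[R]_n).
Proof. by split=> [|x]; rewrite ?trmx0 // /qform mulmx0 mul0mx mxE. Qed.

Lemma psdD n (A B : 'M[R]_n) : psd A -> psd B -> psd (A + B).
Proof.
move=> [sA pA] [sB pB]; split=> [|x]; first by rewrite trmxD sA sB.
by rewrite qformD addr_ge0.
Qed.

Lemma posdefDpsd n (A B : 'M[R]_n) : posdef A -> psd B -> posdef (A + B).
Proof.
move=> [sA pA] [sB pB]; split=> [|x x0]; first by rewrite trmxD sA sB.
by rewrite -[_ 0 0]/(qform _ x) qformD ltr_wpDr //; apply: pA.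
Qed.

Lemma psd_congr n m (Q : 'M[R]_n) (X : 'M[R]_(n, m)) :
  psd Q -> psd (X^T *m Q *m X).
Proof.
move=> [sQ pQ]; split=> [|x]; first by rewrite !trmx_mul trmxK sQ mulmxA.
by have := pQ (X *m x); rewrite /qform trmx_mul !mulmxA.
Qed.

Lemma posdef_unitmx n (A : 'M[R]_n) : posdef A -> A \in unitmx.
Proof.
move=> [sA pA]; rewrite -row_free_unit; apply: inj_row_free => v vA0.
apply/eqP; apply: contraT => /negbTE v0.
have /pA : v^T != 0 by rewrite -trmx0 (inj_eq (@trmx_inj _ _ _)) v0.
by rewrite trmxK -mulmxA -[A]sA -trmx_mul vA0 trmx0 mulmx0 mxE ltxx.
Qed.

Lemma invmx_sym n (A : 'M[R]_n) : A^T = A -> (invmx A)^T = invmx A.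
Proof. by rewrite trmx_inv => ->. Qed.

Lemma posdef_invmx n (A : 'M[R]_n) : posdef A -> posdef (invmx A).
Proof.
move=> pA; have uA := posdef_unitmx pA; have sA := posdef_sym pA.
split=> [|x x0]; first exact: invmx_sym.
have y0 : invmx A *m x != 0.
  by apply: contraNneq x0 => y0; rewrite -(mulKVmx uA x) y0 mulmx0.
case: pA => _ /(_ _ y0); rewrite trmx_mul trmx_inv sA.
by rewrite !mulmxA mulmxKV.
Qed.

Lemma diagpos_posdef n (A : 'M[R]_n) : diagpos A -> posdef A.
Proof.
move=> [/diag_mxP [d ->] dpos]; split=> [|x x0]; first by rewrite tr_diag_mx.
have d_gt0 i : 0 < d 0 i by have := dpos i; rewrite mxE eqxx mulr1n.
have [j xj] : exists j, x j 0 != 0.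
  apply/existsP; apply: contraR x0 => /existsPn x0; apply/eqP/matrixP => i k.
  by rewrite ord1 mxE; apply/eqP; rewrite -[_ == _]negbK x0.
have sq_gt0 i : x i 0 != 0 -> 0 < x i 0 * x i 0.
  by move=> xi; rewrite lt0r mulf_neq0 //= -expr2 sqr_ge0.
rewrite mul_mx_diag mxE (bigD1 j) //= addrC ltr_wpDl //.
  apply: sumr_ge0 => i _; rewrite !mxE mulrAC.
  by apply/mulr_ge0/ltW; rewrite ?(d_gt0 i) // -expr2 sqr_ge0.
by rewrite !mxE mulrAC; exact/mulr_gt0/d_gt0/sq_gt0.
Qed.

Lemma posdef1 n : posdef (1%:M : 'M[R]_n).
Proof.
apply: diagpos_posdef; split=> [|i]; first exact: scalar_mx_is_diag.
by rewrite mxE eqxx mulr1n ltr01.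
Qed.

Lemma posdef_gt0 n (A : 'M[R]_n) i : posdef A -> 0 < A i i.
Proof.
move=> [_ /(_ (delta_mx i 0))]; rewrite trmx_delta -rowE -colE !mxE; apply.
by apply/eqP => /matrixP /(_ i 0); rewrite !mxE !eqxx => /eqP; rewrite oner_eq0.
Qed.

Lemma diagposE n (A : 'M[R]_n) : diagpos A <-> is_diag_mx A /\ posdef A.
Proof.
split=> [dA|[dA pA]]; last by split=> // i; apply: posdef_gt0.
by split; [case: dA | apply: diagpos_posdef].
Qed.

Lemma diagpos_invmx n (A : 'M[R]_n) : diagpos A -> diagpos (invmx A).
Proof.
move=> [/diag_mxP [d ->] dpos].
have d_gt0 i : 0 < d 0 i by have := dpos i; rewrite mxE eqxx mulr1n.
have dV : diag_mx d *m diag_mx (\row_j (d 0 j)^-1) = 1%:M.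
  rewrite mulmx_diag -diag_const_mx; congr diag_mx; apply/matrixP => i j.
  by rewrite !mxE divff // gt_eqF.
have [ud _] := mulmx1_unit dV.
rewrite -[invmx _]mulmx1 -dV mulmxA mulVmx // mul1mx.
split=> [|i]; first exact: diag_mx_is_diag.
by rewrite !mxE eqxx mulr1n invr_gt0.
Qed.

Lemma diagpos_sym n (X : 'M[R]_n) : diagpos X -> X^T = X.
Proof. by move/diagpos_posdef/posdef_sym. Qed.

Lemma diag_posdef_invmx n (X : 'M[R]_n) :
  is_diag_mx X -> posdef X -> diagpos (invmx X).
Proof. by move=> dX pX; apply/diagpos_invmx/diagposE. Qed.

Lemma posdef_mx11 (M : 'M[R]_1) : posdef M <-> 0 < M 0 0.
Proof.
split=> [[_ /(_ 1%:M)]|M_gt0]; first by rewrite trmx1 mul1mx mulmx1 oner_eq0; apply.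
split=> [|x x0]; first by apply/matrixP => i j; rewrite !ord1 mxE.
have x00 : x 0 0 != 0.
  by apply: contraNneq x0 => e; apply/eqP/matrixP => i j; rewrite !ord1 e mxE.
rewrite !(mxE, big_ord1) mulrAC mulr_gt0 //.
by rewrite lt0r mulf_neq0 //= -expr2 sqr_ge0.
Qed.

Lemma sym2_trmx p r (A : 'M[R]_p) (B : 'M[R]_(p, r)) (C : 'M[R]_r) :
  A^T = A -> C^T = C -> (sym2 A B C)^T = sym2 A B C.
Proof. by move=> sA sC; rewrite /sym2 tr_block_mx trmxK sA sC. Qed.

Lemma qform_sym2 p r (A : 'M[R]_p) (B : 'M[R]_(p, r)) (C : 'M[R]_r) u v :
  A^T = A -> A \in unitmx ->
  qform (sym2 A B C) (col_mx u v) =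
  qform A (u + invmx A *m B *m v) + qform (C - B^T *m invmx A *m B) v.
Proof.
move=> sA uA; rewrite /qform -addmxE; congr (fun M : 'M_1 => M 0 0).
rewrite tr_col_mx /sym2 mul_row_block mul_row_col trmxD !trmx_mul trmx_inv sA.
rewrite !(mulmxDl, mulmxDr, mulmxBl, mulmxBr, mulmxN, mulNmx) !mulmxA.
by rewrite mulmxK // !mulmxKV //; entrywise_ring.
Qed.

Lemma posdef_sym2P p r (A : 'M[R]_p) (B : 'M[R]_(p, r)) (C : 'M[R]_r) :
  posdef (sym2 A B C) <-> posdef A /\ posdef (C - B^T *m invmx A *m B).
Proof.
split=> [[sM pM]|[pA [sS pS]]].
  have [sA sC] : A^T = A /\ C^T = C.
    by move: sM; rewrite /sym2 tr_block_mx trmxK => /eq_block_mx [].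
  have pA : posdef A.
    split=> // u u0; have /pM : col_mx u (0 : 'cV[R]_r) != 0.
      by rewrite col_mx_eq0 negb_and u0.
    by rewrite /sym2 tr_col_mx mul_row_block mul_row_col trmx0 !(mul0mx, mulmx0, addr0).
  have uA := posdef_unitmx pA; split=> //; split=> [|v v0].
    by rewrite trmxB !trmx_mul trmx_inv trmxK sA sC mulmxA.
  have /pM : col_mx (- (invmx A *m B *m v)) v != 0.
    by rewrite col_mx_eq0 negb_and v0 orbT.
  by rewrite -[_ 0 0]/(qform _ _) qform_sym2 // addNr /qform mulmx0 mxE add0r.
have sA := posdef_sym pA; have uA := posdef_unitmx pA.
have sC : C^T = C.
  rewrite -[C](subrK (B^T *m invmx A *m B)) trmxD sS.
  by rewrite !trmx_mul trmx_inv trmxK sA mulmxA.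
split=> [|x]; first exact: sym2_trmx.
rewrite -(vsubmxK x); move: (usubmx x) (dsubmx x) => u v.
rewrite col_mx_eq0 negb_and -[_ 0 0]/(qform _ _) qform_sym2 //.
have [-> /= /orP [u0|//]|v0 _] := eqVneq v 0.
  rewrite mulmx0 addr0 [qform _ 0]/qform trmx0 !mul0mx mxE addr0.
  by case: pA => _ /(_ u u0).
apply: ltr_wpDl; last exact: pS.
by case: (posdef_psd pA).
Qed.

Lemma sym2_schurB m (N : 'M[R]_m) : N^T = N ->
  forall p r (P : 'M[R]_p) (Q : 'M[R]_(p, r)) (C : 'M[R]_r) X Y,
  sym2 P Q C - (row_mx X Y)^T *m N *m row_mx X Y =
  sym2 (P - X^T *m N *m X) (Q - X^T *m N *m Y) (C - Y^T *m N *m Y).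
Proof.
move=> sN p r P Q C X Y.
rewrite /sym2 tr_row_mx mul_col_mx mul_col_row opp_block_mx add_block_mx.
by rewrite trmxB !trmx_mul trmxK sN mulmxA.
Qed.

Lemma row_mx_schurB m p q r (N : 'M[R]_m) (X : 'M[R]_(m, p))
    (A : 'M[R]_(p, q)) (B : 'M[R]_(p, r)) Y Z :
  row_mx A B - X^T *m N *m row_mx Y Z =
  row_mx (A - X^T *m N *m Y) (B - X^T *m N *m Z).
Proof. by rewrite mul_mx_row opp_row_mx add_row_mx. Qed.

Lemma psd_sym2_diag p r (A : 'M[R]_p) (C : 'M[R]_r) :
  psd A -> psd C -> psd (sym2 A 0 C).
Proof.
move=> [sA pA] [sC pC]; split=> [|x]; first exact: sym2_trmx.
rewrite -(vsubmxK x) /qform tr_col_mx /sym2 mul_row_block mul_row_col trmx0.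
by rewrite !(mulmx0, mul0mx, addr0, add0r) addmxE addr_ge0 //; [apply: pA|apply: pC].
Qed.

Lemma posdef_sym2_le p r (A A' : 'M[R]_p) (B B' : 'M[R]_(p, r)) (C C' : 'M[R]_r)
    (S : 'M[R]_p) (T : 'M[R]_r) :
  posdef (sym2 A B C) -> psd S -> psd T ->
  A' = A + S -> B' = B -> C' = C + T -> posdef (sym2 A' B' C').
Proof.
move=> pM pS pT -> -> ->.
have -> : sym2 (A + S) B (C + T) = sym2 A B C + sym2 S 0 T.
  by rewrite /sym2 add_block_mx trmx0 !addr0.
exact/posdefDpsd/psd_sym2_diag.
Qed.

Lemma posdef_sym3_le p q r (A A' : 'M[R]_p) (B B' : 'M[R]_(p, q))
    (C C' : 'M[R]_(p, r)) (D D' : 'M[R]_q) (E E' : 'M[R]_(q, r))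
    (F F' : 'M[R]_r) (S : 'M[R]_p) (T : 'M[R]_q) (U : 'M[R]_r) :
  posdef (sym3 A B C D E F) -> psd S -> psd T -> psd U ->
  A' = A + S -> B' = B -> C' = C -> D' = D + T -> E' = E -> F' = F + U ->
  posdef (sym3 A' B' C' D' E' F').
Proof.
move=> pM pS pT pU eA -> -> eD -> eF.
apply: (posdef_sym2_le pM pS (psd_sym2_diag pT pU)) => //.
by rewrite eD eF /sym2 add_block_mx trmx0 !addr0.
Qed.

Lemma calL_le m n (Lb : 'M[R]_(m, n)) (Db : 'M[R]_m) L (D : 'M[R]_m) :
  posdef Db -> D^T = D -> psd (Lb^T *m invmx Db *m Lb - calL Lb Db L D).
Proof.
move=> pDb sD; have uDb := posdef_unitmx pDb; have sDb := posdef_sym pDb.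
have sE := invmx_sym sD.
have -> : Lb^T *m invmx Db *m Lb - calL Lb Db L D =
    (Lb - Db *m invmx D *m L)^T *m invmx Db *m (Lb - Db *m invmx D *m L).
  rewrite /calL trmxB !trmx_mul sE sDb.
  rewrite !(mulmxDl, mulmxDr, mulmxBl, mulmxBr, mulmxN, mulNmx) !mulmxA.
  by rewrite !mulmxK // !mulmxKV //; entrywise_ring.
exact/psd_congr/posdef_psd/posdef_invmx.
Qed.

Lemma calL1_le m n (Lb L : 'M[R]_(m, n)) :
  psd (Lb^T *m Lb - calL Lb 1%:M L 1%:M).
Proof.
by have := calL_le Lb L (posdef1 m) (trmx1 _ _); rewrite invmx1 mulmx1.
Qed.

Lemma calL_id m n (L : 'M[R]_(m, n)) (D : 'M[R]_m) :
  D \in unitmx -> calL L D L D = L^T *m invmx D *m L.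
Proof. by move=> uD; rewrite /calL mulmxKV //; entrywise_ring. Qed.

End Semidefinite.

Ltac simp_mx :=
  rewrite ?(trmx0, mul0mx, mulmx0, subr0, addr0, oppr0, invmx1, mulmx1,
            mul1mx, trmx1, trmxN, mulNmx, mulmxN, opprK, trmxK, invmxK).

Ltac simp_mx_in H :=
  rewrite ?(trmx0, mul0mx, mulmx0, subr0, addr0, oppr0, invmx1, mulmx1,
            mul1mx, trmx1, trmxN, mulNmx, mulmxN, opprK, trmxK, invmxK) in H.

Ltac schur_elim H pA :=
  case/posdef_sym2P: H => pA H;
  rewrite !(sym2_schurB (invmx_sym (posdef_sym pA)), row_mx_schurB) in H;
  simp_mx_in H.

Ltac schur_intro pA :=
  apply/posdef_sym2P; split; first exact: pA;
  rewrite !(sym2_schurB (invmx_sym (posdef_sym pA)), row_mx_schurB); simp_mx.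

Section Constraints.
Variable R : realFieldType.

Lemma rpi_of_lmi nu mlo mw nx (A : 'M[R]_nx) (B B0 : 'M[R]_(nx, nu))
    (K K0 : 'M[R]_(nu, nx)) (F : 'M[R]_(mw, nx)) (Plo : 'M[R]_(mlo, nx))
    (Pi : 'rV[R]_nx) (Dh D0 : 'M[R]_mlo) (Wh W0 : 'M[R]_mw)
    (blo : 'cV[R]_mlo) (d : 'cV[R]_mw) (bi : R) :
  W0^T = W0 -> D0^T = D0 ->
  posdef (sym6 1%:M 0 0 (- (B^T *m Pi^T)) 0 K
                Dh 0 blo 0 0
                   Wh d 0 0
                      (sc (2 * bi) + calL (B^T *m Pi^T) 1%:M (B0^T *m Pi^T) 1%:M)
                        Pi (Pi *m A)
                         (calL F Wh F (invmx W0)) 0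
                            (calL Plo Dh Plo (invmx D0) + calL K 1%:M K0 1%:M)) ->
  [/\ posdef Dh, posdef Wh &
  posdef (sym3 (sc (2 * bi) - blo^T *m invmx Dh *m blo - d^T *m invmx Wh *m d)
                 Pi (Pi *m (A + B *m K))
               (F^T *m invmx Wh *m F) 0
                 (Plo^T *m invmx Dh *m Plo))].
Proof.
move=> sW0 sD0 H; rewrite /sym6 /sym5 /sym4 /sym3 in H.
schur_elim H pI; schur_elim H pDh; schur_elim H pWh; split=> //.
apply: (posdef_sym3_le H (calL1_le (B^T *m Pi^T) (B0^T *m Pi^T))
  (calL_le F F pWh (invmx_sym sW0))
  (psdD (calL_le Plo Plo pDh (invmx_sym sD0)) (calL1_le K K0))) => //.
- entrywise_ring.
- by rewrite trmx_mul !trmxK mulmxDr mulmxA.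
- entrywise_ring.
- entrywise_ring.
Qed.

Lemma pi_of_lmi nu mhi nx (A : 'M[R]_nx) (B B0 : 'M[R]_(nx, nu))
    (K K0 : 'M[R]_(nu, nx)) (Phi : 'M[R]_(mhi, nx)) (Pi : 'rV[R]_nx)
    (Dh D0 : 'M[R]_mhi) (bhi : 'cV[R]_mhi) (bi : R) :
  D0^T = D0 ->
  posdef (sym4 1%:M 0 (- (B^T *m Pi^T)) K
                Dh bhi 0
                   (sc (2 * bi) + calL (B^T *m Pi^T) 1%:M (B0^T *m Pi^T) 1%:M)
                     (Pi *m A)
                      (calL Phi Dh Phi (invmx D0) + calL K 1%:M K0 1%:M)) ->
  posdef Dh /\
  posdef (sym2 (sc (2 * bi) - bhi^T *m invmx Dh *m bhi) (Pi *m (A + B *m K))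
               (Phi^T *m invmx Dh *m Phi)).
Proof.
move=> sD0 H; rewrite /sym4 /sym3 in H.
schur_elim H pI; schur_elim H pDh; split=> //.
apply: (posdef_sym2_le H (calL1_le (B^T *m Pi^T) (B0^T *m Pi^T))
  (psdD (calL_le Phi Phi pDh (invmx_sym sD0)) (calL1_le K K0))).
- entrywise_ring.
- by rewrite trmx_mul !trmxK mulmxDr mulmxA.
- entrywise_ring.
Qed.

Lemma xu_of_lmi mlo mhi nx (Plo : 'M[R]_(mlo, nx)) (Phi : 'M[R]_(mhi, nx))
    (V : 'rV[R]_nx) (Slo S0lo : 'M[R]_mlo) (Shi S0hi : 'M[R]_mhi)
    (blo : 'cV[R]_mlo) (bhi : 'cV[R]_mhi) (v : R) :
  S0lo^T = S0lo -> S0hi^T = S0hi ->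
  posdef (sym5 Slo 0 blo 0 0
                 Shi bhi 0 0
                     (sc (2 * v)) V V
                       (calL Plo Slo Plo (invmx S0lo)) 0
                          (calL Phi Shi Phi (invmx S0hi))) ->
  [/\ posdef Slo, posdef Shi &
  posdef (sym3 (sc (2 * v) - blo^T *m invmx Slo *m blo - bhi^T *m invmx Shi *m bhi)
                 V V
               (Plo^T *m invmx Slo *m Plo) 0
                 (Phi^T *m invmx Shi *m Phi))].
Proof.
move=> sS0lo sS0hi H; rewrite /sym5 /sym4 /sym3 in H.
schur_elim H pSlo; schur_elim H pShi; split=> //.
apply: (posdef_sym3_le H (@psd0 R _) (calL_le Plo Plo pSlo (invmx_sym sS0lo))
  (calL_le Phi Phi pShi (invmx_sym sS0hi))) => //.
- by rewrite addr0.
- entrywise_ring.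
- entrywise_ring.
Qed.

Lemma decrease_of_lmi nu nx (A : 'M[R]_nx) (B B0 : 'M[R]_(nx, nu))
    (K K0 : 'M[R]_(nu, nx)) (Q : 'M[R]_nx) (Rc : 'M[R]_nu) (Th Th0 : 'M[R]_nx) :
  posdef Th -> Th0^T = Th0 ->
  posdef (sym5 1%:M 0 0 (- B^T) K
                (invmx Q) 0 0 1%:M
                   (invmx Rc) 0 K
                     (calL 1%:M Th 1%:M Th0 + calL B^T 1%:M B0^T 1%:M) A
                       (Th + calL K 1%:M K0 1%:M)) ->
  negdef ((A + B *m K)^T *m Th *m (A + B *m K) - Th + Q + K^T *m Rc *m K).
Proof.
move=> pTh sTh0 H; rewrite /sym5 /sym4 /sym3 in H.
schur_elim H pI; schur_elim H pQV; schur_elim H pRV.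
have psdTh := calL_le 1%:M 1%:M pTh sTh0.
have psdB := calL1_le B^T B0^T.
rewrite trmx1 mul1mx mulmx1 in psdTh; rewrite trmxK in psdB.
have /posdef_sym2P [_] :
    posdef (sym2 (invmx Th) (A + B *m K) (Th - Q - K^T *m Rc *m K)).
  apply: (posdef_sym2_le H (psdD psdTh psdB) (calL1_le K K0)) => //.
  - entrywise_ring.
  - entrywise_ring.
by rewrite invmxK /negdef; congr posdef; entrywise_ring.
Qed.

Lemma terminal_of_lmi mhi nx (Phi : 'M[R]_(mhi, nx)) (Mh M0 : 'M[R]_mhi)
    (Th : 'M[R]_nx) (bhi : 'cV[R]_mhi) (r : R) :
  M0^T = M0 -> posdef (calL Phi Mh Phi (invmx M0) - Th) ->
  posdef (sym2 Mh bhi (sc r)) ->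
  posdef (Phi^T *m invmx Mh *m Phi - Th) /\
  0 < r - (bhi^T *m invmx Mh *m bhi) 0 0.
Proof.
move=> sM0 pL /posdef_sym2P [pMh /posdef_mx11].
rewrite addmxE oppmxE mxE eqxx mulr1n => pr; split=> //.
have -> : Phi^T *m invmx Mh *m Phi - Th = (calL Phi Mh Phi (invmx M0) - Th) +
    (Phi^T *m invmx Mh *m Phi - calL Phi Mh Phi (invmx M0)) by entrywise_ring.
exact/posdefDpsd/calL_le/invmx_sym.
Qed.

Lemma lmi_of_rpi nu mlo mw nx (A : 'M[R]_nx) (B : 'M[R]_(nx, nu))
    (K : 'M[R]_(nu, nx)) (F : 'M[R]_(mw, nx)) (Plo : 'M[R]_(mlo, nx))
    (Pi : 'rV[R]_nx) (D0 : 'M[R]_mlo) (W0 : 'M[R]_mw)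
    (blo : 'cV[R]_mlo) (d : 'cV[R]_mw) (bi : R) :
  posdef D0 -> posdef W0 ->
  posdef (sym3 (sc (2 * bi) - blo^T *m D0 *m blo - d^T *m W0 *m d)
                 Pi (Pi *m (A + B *m K))
               (F^T *m W0 *m F) 0
                 (Plo^T *m D0 *m Plo)) ->
  posdef (sym6 1%:M 0 0 (- (B^T *m Pi^T)) 0 K
                (invmx D0) 0 blo 0 0
                   (invmx W0) d 0 0
                      (sc (2 * bi) + calL (B^T *m Pi^T) 1%:M (B^T *m Pi^T) 1%:M)
                        Pi (Pi *m A)
                         (calL F (invmx W0) F (invmx W0)) 0
                            (calL Plo (invmx D0) Plo (invmx D0) + calL K 1%:M K 1%:M)).
Proof.
move=> pD0 pW0 H; have pD0V := posdef_invmx pD0; have pW0V := posdef_invmx pW0.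
rewrite !calL_id ?unitmx1 ?posdef_unitmx // /sym6 /sym5 /sym4 /sym3.
schur_intro (@posdef1 R nu); schur_intro pD0V; schur_intro pW0V.
apply: (posdef_sym3_le H (@psd0 R _) (@psd0 R _) (@psd0 R _)) => //.
- entrywise_ring.
- by rewrite trmx_mul !trmxK mulmxDr mulmxA.
- entrywise_ring.
- entrywise_ring.
Qed.

Lemma lmi_of_pi nu mhi nx (A : 'M[R]_nx) (B : 'M[R]_(nx, nu))
    (K : 'M[R]_(nu, nx)) (Phi : 'M[R]_(mhi, nx)) (Pi : 'rV[R]_nx)
    (D0 : 'M[R]_mhi) (bhi : 'cV[R]_mhi) (bi : R) :
  posdef D0 ->
  posdef (sym2 (sc (2 * bi) - bhi^T *m D0 *m bhi) (Pi *m (A + B *m K))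
               (Phi^T *m D0 *m Phi)) ->
  posdef (sym4 1%:M 0 (- (B^T *m Pi^T)) K
                (invmx D0) bhi 0
                   (sc (2 * bi) + calL (B^T *m Pi^T) 1%:M (B^T *m Pi^T) 1%:M)
                     (Pi *m A)
                      (calL Phi (invmx D0) Phi (invmx D0) + calL K 1%:M K 1%:M)).
Proof.
move=> pD0 H; have pD0V := posdef_invmx pD0.
rewrite !calL_id ?unitmx1 ?posdef_unitmx // /sym4 /sym3.
schur_intro (@posdef1 R nu); schur_intro pD0V.
apply: (posdef_sym2_le H (@psd0 R _) (@psd0 R _)).
- entrywise_ring.
- by rewrite trmx_mul !trmxK mulmxDr mulmxA.
- entrywise_ring.
Qed.

Lemma lmi_of_xu mlo mhi nx (Plo : 'M[R]_(mlo, nx)) (Phi : 'M[R]_(mhi, nx))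
    (V : 'rV[R]_nx) (S0lo : 'M[R]_mlo) (S0hi : 'M[R]_mhi)
    (blo : 'cV[R]_mlo) (bhi : 'cV[R]_mhi) (v : R) :
  posdef S0lo -> posdef S0hi ->
  posdef (sym3 (sc (2 * v) - blo^T *m S0lo *m blo - bhi^T *m S0hi *m bhi)
                 V V
               (Plo^T *m S0lo *m Plo) 0
                 (Phi^T *m S0hi *m Phi)) ->
  posdef (sym5 (invmx S0lo) 0 blo 0 0
                 (invmx S0hi) bhi 0 0
                     (sc (2 * v)) V V
                       (calL Plo (invmx S0lo) Plo (invmx S0lo)) 0
                          (calL Phi (invmx S0hi) Phi (invmx S0hi))).
Proof.
move=> pS0lo pS0hi H.
have pSloV := posdef_invmx pS0lo; have pShiV := posdef_invmx pS0hi.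
rewrite !calL_id ?posdef_unitmx // /sym5 /sym4 /sym3.
schur_intro pSloV; schur_intro pShiV.
by apply: (posdef_sym3_le H (@psd0 R _) (@psd0 R _) (@psd0 R _)); rewrite ?addr0.
Qed.

Lemma lmi_of_decrease nu nx (A : 'M[R]_nx) (B : 'M[R]_(nx, nu))
    (K : 'M[R]_(nu, nx)) (Q : 'M[R]_nx) (Rc : 'M[R]_nu) (Th : 'M[R]_nx) :
  posdef Q -> posdef Rc -> posdef Th ->
  negdef ((A + B *m K)^T *m Th *m (A + B *m K) - Th + Q + K^T *m Rc *m K) ->
  posdef (sym5 1%:M 0 0 (- B^T) K
                (invmx Q) 0 0 1%:M
                   (invmx Rc) 0 K
                     (calL 1%:M Th 1%:M Th + calL B^T 1%:M B^T 1%:M) A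
                       (Th + calL K 1%:M K 1%:M)).
Proof.
move=> pQ pRc pTh nD; have pQV := posdef_invmx pQ; have pRcV := posdef_invmx pRc.
have H : posdef (sym2 (invmx Th) (A + B *m K) (Th - Q - K^T *m Rc *m K)).
  apply/posdef_sym2P; split; first exact: posdef_invmx.
  by rewrite invmxK; move: nD; rewrite /negdef; congr posdef; entrywise_ring.
rewrite !calL_id ?unitmx1 ?posdef_unitmx // /sym5 /sym4 /sym3.
schur_intro (@posdef1 R nu); schur_intro pQV; schur_intro pRcV.
apply: (posdef_sym2_le H (@psd0 R _) (@psd0 R _)) => //.
- entrywise_ring.
- entrywise_ring.
Qed.

Lemma lmi_of_terminal mhi nx (Phi : 'M[R]_(mhi, nx)) (M0 : 'M[R]_mhi)
    (Th : 'M[R]_nx) (bhi : 'cV[R]_mhi) (r : R) :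
  posdef M0 -> posdef (Phi^T *m M0 *m Phi - Th) ->
  0 < r - (bhi^T *m M0 *m bhi) 0 0 ->
  posdef (calL Phi (invmx M0) Phi (invmx M0) - Th) /\
  posdef (sym2 (invmx M0) bhi (sc r)).
Proof.
move=> pM0 pE pr; rewrite calL_id ?unitmx_inv ?posdef_unitmx // invmxK.
split=> //; apply/posdef_sym2P; split; first exact: posdef_invmx.
by apply/posdef_mx11; rewrite invmxK addmxE oppmxE mxE eqxx mulr1n.
Qed.

End Constraints.

Section Feasibility.
Variables (R : realFieldType) (nx nu mw mlo mhi meps mx mu mxv : nat).
Variable D : data R nx nu mw mlo mhi meps mx mu mxv.

Lemma nlp_feas_invert_hats (Z0 Zb : var R nx nu mw mlo mhi meps mx mu) :
  nlp_feas D Z0 -> sdp_feas D Z0 Zb -> nlp_feas D (invert_hats Zb).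
Proof.
case=> _ [_ [pTh0 [dM0 [dDW0 [dDh0 [dS0 [dR0 _]]]]]]].
case=> hS [bS [pTh [dM [dDW [dDh [dS [dR [rpi [pi [xx [uu [dd [ee tt]]]]]]]]]]]]].
have R1 i := rpi_of_lmi (diagpos_sym (dDW0 i).2) (diagpos_sym (dDW0 i).1) (rpi i).
have P1 i := pi_of_lmi (diagpos_sym (dDh0 i)) (pi i).
have X1 i := xu_of_lmi (diagpos_sym (dS0 i).1) (diagpos_sym (dS0 i).2) (xx i).
have U1 i := xu_of_lmi (diagpos_sym (dR0 i).1) (diagpos_sym (dR0 i).2) (uu i).
have /posdef_sym2P [pM _] := tt.
rewrite /nlp_feas /=; do 3!split=> //.
split; first exact: diag_posdef_invmx.
split=> [i|]; first by have [? ? _] := R1 i;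
  split; apply: diag_posdef_invmx => //; [exact: (dDW i).1 | exact: (dDW i).2].
split=> [i|]; first by have [? _] := P1 i; apply: diag_posdef_invmx.
split=> [i|]; first by have [? ? _] := X1 i;
  split; apply: diag_posdef_invmx => //; [exact: (dS i).1 | exact: (dS i).2].
split=> [i|]; first by have [? ? _] := U1 i;
  split; apply: diag_posdef_invmx => //; [exact: (dR i).1 | exact: (dR i).2].
split=> [i|]; first by have [_ _ ?] := R1 i.
split=> [i|]; first by have [_ ?] := P1 i.
split=> [i|]; first by have [_ _ ?] := X1 i.
split=> [i|]; first by have [_ _ ?] := U1 i.
split; first exact: decrease_of_lmi pTh (posdef_sym pTh0) dd.
exact: terminal_of_lmi (diagpos_sym dM0) ee tt.
Qed.

Lemma sdp_feas_invert_hats (Z0 : var R nx nu mw mlo mhi meps mx mu) :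
  posdef (dQ D) -> posdef (dR D) ->
  nlp_feas D Z0 -> sdp_feas D Z0 (invert_hats Z0).
Proof.
move=> pQ pR.
case=> hS [bS [pTh [dM [dDW [dDh [dS [dR [rpi [pi [xx [uu [dd [ee tt]]]]]]]]]]]]].
have diag_invmx n (X : 'M[R]_n) : diagpos X -> is_diag_mx (invmx X).
  by case/diagpos_invmx.
rewrite /sdp_feas /=; do 3!split=> //.
split; first exact: diag_invmx.
split=> [i|]; first by split; apply: diag_invmx; [exact: (dDW i).1 | exact: (dDW i).2].
split=> [i|]; first exact: diag_invmx.
split=> [i|]; first by split; apply: diag_invmx; [exact: (dS i).1 | exact: (dS i).2].
split=> [i|]; first by split; apply: diag_invmx; [exact: (dR i).1 | exact: (dR i).2].
split=> [i|].
  exact: lmi_of_rpi (diagpos_posdef (dDW i).1) (diagpos_posdef (dDW i).2) (rpi i).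
split=> [i|]; first exact: lmi_of_pi (diagpos_posdef (dDh i)) (pi i).
split=> [i|].
  exact: lmi_of_xu (diagpos_posdef (dS i).1) (diagpos_posdef (dS i).2) (xx i).
split=> [i|].
  exact: lmi_of_xu (diagpos_posdef (dR i).1) (diagpos_posdef (dR i).2) (uu i).
split; first exact: lmi_of_decrease pQ pR pTh dd.
exact: lmi_of_terminal (diagpos_posdef dM) ee tt.
Qed.

End Feasibility.

Theorem corollary1 (R : realFieldType) (nx nu mw mlo mhi meps mx mu mxv : nat)
  (D : data R nx nu mw mlo mhi meps mx mu mxv)
  (Z0 Zb : var R nx nu mw mlo mhi meps mx mu) :
  posdef (dQ D) -> posdef (dR D) ->
  0 <= dalpha D -> 0 <= dbeta D -> 0 <= dgamma D -> 0 < dtheta D ->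
  mxle 0 (dvx D) -> mxle 0 (dvu D) ->
  nlp_feas D Z0 ->
  sdp_opt D Z0 Zb ->
  nlp_feas D (invert_hats Zb) /\ cost D Zb <= cost D Z0.
Proof.
move=> pQ pR _ _ _ _ _ _ feas0 [feasb optb].
split; first exact: nlp_feas_invert_hats feas0 feasb.
(* [invert_hats] changes only the multipliers, on which the cost does not depend. *)
exact: optb _ (sdp_feas_invert_hats pQ pR feas0).
Qed.
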